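(* Let $\mathrm{A}$ be any nontrivial system of Bilocal Classical Theory (BCT), and let $\rho=\sum_{i=1}^{D_{\mathrm A}}p_i|i)_{\mathrm A}$ be a deterministic state of $\mathrm A$, where $|1)_{\mathrm A},\dots,|D_{\mathrm A})_{\mathrm A}$ are the pure states of $\mathrm A$ and $\mathbf p=(p_i)_i$ is a probability distribution. Then the information content of $\rho$ is \[ I(\rho)=\frac{H(\mathbf p)+1}{2}, \] where $H(\mathbf p)=-\sum_i p_i\log_2 p_i$ is the Shannon entropy.
   Context: BCT is an operational probabilistic theory with the following structure. Systems: a trivial system $\mathrm I$ (with $\mathrm{AI}=\mathrm{IA}=\mathrm A$) and, for every integer $D>1$, exactly one system of size $D$ (the size $D_{\mathrm A}$ is the dimension of the real span of the states of $\mathrm A$). For a nontrivial system $\mathrm A$, every state is a nonnegative combination $\sum_i p_i|i)_{\mathrm A}$ of the $D_{\mathrm A}$ pure states $|i)_{\mathrm A}$, which are the vertices of the simplex of deterministic states (deterministic iff $\sum_i p_i=1$) and are jointly perfectly discriminable; each system has a unique deterministic effect $e_{\mathrm A}$, with $(e_{\mathrm A}|i)_{\mathrm A}=1$. Composition: for nontrivial $\mathrm A,\mathrm B$, the composite $\mathrm{AB}$ is the system of size $2D_{\mathrm A}D_{\mathrm B}$, with pure states $|(ij)_s)_{\mathrm{AB}}$, $1\le i\le D_{\mathrm A}$, $1\le j\le D_{\mathrm B}$, $s\in\{+,-\}$; parallel composition of pure states is $|i)_{\mathrm A}\boxtimes|j)_{\mathrm B}=\tfrac12\sum_{s=\pm}|(ij)_s)_{\mathrm{AB}}$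 (extended bilinearly), and for three systems $((ij)_{s_1}k)_{s_2}=(i(jk)_{s_1s_2})_{s_1}$, signs multiplying as $\pm1$. Transformations act linearly. Deterministic transformations (channels) $\mathcal C\in\mathsf{Tr}_1(\mathrm E\to\mathrm F)$ between nontrivial systems are exactly those for which, for each $j\in\{1,\dots,D_{\mathrm E}\}$, there is a probability distribution $\{\lambda^{(j)}_{m\tau}\}$ over $(m,\tau)\in\{1,\dots,D_{\mathrm F}\}\times\{+,-\}$ such that for every system $\mathrm A$ and every pure state, $(\mathcal I_{\mathrm A}\boxtimes\mathcal C)|(ij)_s)_{\mathrm{AE}}=\sum_{m,\tau}\lambda^{(j)}_{m\tau}|(im)_{\tau s})_{\mathrm{AF}}$. Multiple copies: $\mathrm A^{\boxtimes N}$ denotes $(\cdots((\mathrm A_1\mathrm A_2)\mathrm A_3)\cdots)\mathrm A_N$ with each $\mathrm A_k$ a copy of $\mathrm A$; its pure states are labelled $|\mathbf i_{\mathbf s})$ with $\mathbf i\in\{1,\dots,D_{\mathrm A}\}^N$, $\mathbf s\in\{+,-\}^{N-1}$, and $\rho^{\boxtimes N}=\sum_{\mathbf i,\mathbf s}p_{i_1}\cdots p_{i_N}2^{-(N-1)}|\mathbf i_{\mathbf s})$. The bibit $\mathrm B$ is the system of size $2$. Information content. A dilation of a state $\sigma$ of a system $\mathrm X$ is a state $\Psi$ of $\mathrm{XE}$ (for some system $\mathrm E$) with $(\mathcal I_{\mathrm X}\boxtimes e_{\mathrm E})\Psi=\sigma$. A refinement of a state $\Psi$ is a finite collection of states $\{\Gamma_i\}$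 belonging to a common preparation test with $\sum_i\Gamma_i=\Psi$. The operational norm of an element $\delta$ of the real span of states is $\|\delta\|_{\rm op}=\sup_{\{a_0,a_1\}}(a_0-a_1|\delta)$ over binary observation tests; in BCT it equals $\sum_k|\delta_k|$ for $\delta=\sum_k\delta_k|k)$ expanded in pure states. For a channel $\mathcal C$ on $\mathrm A^{\boxtimes N}$, $D(\rho^{\boxtimes N},\mathcal C)=\sup_{\Psi}\sup_{\{\Gamma_i\}}\sum_i\|(\mathcal C\boxtimes\mathcal I_{\mathrm E})\Gamma_i-\Gamma_i\|_{\rm op}$, the suprema over all dilations $\Psi$ of $\rho^{\boxtimes N}$ (all ancillas $\mathrm E$) and all refinements $\{\Gamma_i\}$ of $\Psi$. Let $E_{N,M,\varepsilon}(\rho)$ be the set of pairs of channels $\mathcal E\in\mathsf{Tr}_1(\mathrm A^{\boxtimes N}\to\mathrm B^{\boxtimes M})$, $\mathcal D\in\mathsf{Tr}_1(\mathrm B^{\boxtimes M}\to\mathrm A^{\boxtimes N})$ with $D(\rho^{\boxtimes N},\mathcal D\mathcal E)<\varepsilon$; $R_{N,\varepsilon}(\rho)=\min\{M:E_{N,M,\varepsilon}(\rho)\neq\emptyset\}/N$, and $I(\rho)=\lim_{\varepsilon\to0}\limsup_{N\to\infty}R_{N,\varepsilon}(\rho)$. *)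

From HB Require Import structures.
From mathcomp Require Import all_boot all_order all_algebra.
From mathcomp Require Import all_classical all_reals all_analysis.
Set Implicit Arguments. Unset Strict Implicit. Unset Printing Implicit Defensive.
Import Order.TTheory GRing.Theory Num.Theory.
Import numFieldNormedType.Exports.
Local Open Scope classical_set_scope.
Local Open Scope ring_scope.

(* A nontrivial system of size D has D pure states; a (possibly unnormalized)  *)
(* element of the span of its states is a real vector indexed by a finite type *)
(* L of pure-state labels (#|L| = D).  Signs + / - are encoded as false/true,  *)
(* so the sign product is [addb].                                              *)

Section BCT.
Variable R : realType.

(* pure-state labels of A^{[x]N} with N = n.+1 and D_A = D : (i, s) with     *)
(* i in {1..D}^N and s in {+,-}^{N-1}                                        *)
Definition LabN (D n : nat) : finType :=
  ({ffun 'I_n.+1 -> 'I_D} * {ffun 'I_n -> bool})%type.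

(* pure-state labels of the composite XE, E nontrivial of size d:            *)
(* |(x k)_t)_{XE}                                                            *)
Definition LabAnc (L : finType) (d : nat) : finType := (L * 'I_d * bool)%type.

Definition is_state (L : finType) (v : L -> R) :=
  (forall x, 0 <= v x) /\ \sum_(x : L) v x <= 1.
Definition is_deterministic (L : finType) (v : L -> R) :=
  is_state v /\ \sum_(x : L) v x = 1.

Definition prep_test (L : finType) (r : nat) (G : 'I_r -> L -> R) :=
  (forall i, is_state (G i)) /\ is_deterministic (fun x => \sum_(i < r) G i x).

Definition refinement (L : finType) (Psi : L -> R) (r : nat) (G : 'I_r -> L -> R) :=
  prep_test G /\ forall x, \sum_(i < r) G i x = Psi x.

Definition opnorm (L : finType) (v : L -> R) : R := \sum_(x : L) `|v x|.

(* dilation of sigma (state of X) with a nontrivial ancilla E of size d:     *)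
(* (I_X [x] e_E) |(j k)_s) = |j)_X                                           *)
Definition dilation (L : finType) (sigma : L -> R) (d : nat) (Psi : LabAnc L d -> R) :=
  is_state Psi /\
  forall j : L, \sum_(k < d) \sum_(s : bool) Psi (j, k, s) = sigma j.

Definition is_distr (L : finType) (f : L -> R) :=
  (forall x, 0 <= f x) /\ \sum_(x : L) f x = 1.

(* channels E -> F between nontrivial systems: for each input label j a       *)
(* probability distribution lam j over (output label m, sign tau)            *)
Definition is_channel (L1 L2 : finType) (lam : L1 -> L2 * bool -> R) :=
  forall j, is_distr (lam j).

(* action of C on X alone (C = C [x] I_I):  C|j) = sum_{m,tau} lam_{m tau} |m) *)
Definition act_triv (L1 L2 : finType) (lam : L1 -> L2 * bool -> R) (v : L1 -> R) :
  L2 -> R := fun m => \sum_(j : L1) \sum_(t : bool) v j * lam j (m, t).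

(* action of C [x] I_E, E of size d:                                         *)
(* (C [x] I_E) |(j k)_s) = sum_{m,tau} lam^{(j)}_{m tau} |(m k)_{tau s})       *)
Definition act_anc (L1 L2 : finType) (lam : L1 -> L2 * bool -> R) (d : nat)
  (Psi : LabAnc L1 d -> R) : LabAnc L2 d -> R :=
  fun y => let: (m, k, u) := y in
    \sum_(j : L1) \sum_(t : bool) Psi (j, k, addb t u) * lam j (m, t).

(* D(sigma, C) where C is given by its action on X (Ttriv) and on XE for each *)
(* nontrivial ancilla of size d (Tanc d): the supremum over all dilations    *)
(* (all ancillas, including the trivial one) and all their refinements of    *)
(* sum_i || (C [x] I_E) G_i - G_i ||_op                                       *)
Definition disturb_vals (L : finType) (sigma : L -> R)
  (Ttriv : (L -> R) -> (L -> R))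
  (Tanc : forall d : nat, (LabAnc L d -> R) -> (LabAnc L d -> R)) : set R :=
  [set v | (exists (r : nat) (G : 'I_r -> L -> R),
              refinement sigma G /\
              v = \sum_(i < r) opnorm (fun x => Ttriv (G i) x - G i x))
        \/ (exists (d : nat) (Psi : LabAnc L d -> R), (1 < d)%N /\ dilation sigma Psi /\
              exists (r : nat) (G : 'I_r -> LabAnc L d -> R),
                refinement Psi G /\
                v = \sum_(i < r) opnorm (fun x => Tanc d (G i) x - G i x))].

Definition disturbance (L : finType) (sigma : L -> R) Ttriv Tanc : \bar R :=
  ereal_sup [set v%:E | v in @disturb_vals L sigma Ttriv Tanc].

Definition tensor_power (D n : nat) (p : 'I_D -> R) : LabN D n -> R :=
  fun y => (\prod_(k < n.+1) p (y.1 k)) * (2^-1) ^+ n.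

(* E_{N,M,eps}(rho) nonempty, N = n.+1, M = m.+1; B is the bibit (size 2)    *)
Definition codes_exist (D : nat) (p : 'I_D -> R) (n m : nat) (eps : R) :=
  exists (lamE : LabN D n -> LabN 2 m * bool -> R)
         (lamD : LabN 2 m -> LabN D n * bool -> R),
    is_channel lamE /\ is_channel lamD /\
    (disturbance (@tensor_power D n p)
       (fun v => act_triv lamD (act_triv lamE v))
       (fun d Psi => act_anc lamD (act_anc lamE Psi)) < eps%:E)%E.

(* R_{N,eps}(rho) = min{M : E_{N,M,eps} nonempty} / N   (+oo if no such M)    *)
Definition rate (D : nat) (p : 'I_D -> R) (n : nat) (eps : R) : \bar R :=
  ereal_inf [set ((m.+1)%:R / (n.+1)%:R)%:E | m in [set m | codes_exist p n m eps]].

Definition limsup_rate (D : nat) (p : 'I_D -> R) (eps : R) : \bar R :=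
  limn_esup (fun n => rate p n eps).

Definition log2 (x : R) : R := ln x / ln 2.

Definition shannon (D : nat) (p : 'I_D -> R) : R := - \sum_(i < D) p i * log2 (p i).

End BCT.

(* Achievability: with deterministic encoder and decoder, the composite channel
   acts on pure states as a relabelling that fixes every correctly decoded
   label, so for any dilation and refinement its disturbance is at most twice
   the weight of the other labels.  Encoding each typical sequence together
   with all its 2^(N-1) sign strings injectively into the 2^(2M-1) pure states
   of B^M thus succeeds once 2^(N(H+d)) 2^(N-1) <= 2^(2M-1) (d being the
   slack of typicality), i.e. when M/N >= (H+1+d)/2.
   Converse: refining rho^N into its pure components bounds the disturbance
   below by the probability of not recovering the input label.  The return
   probabilities of all labels sum to at most the number 2^(2M-1) of output
   labels, and a typical label carries weight at most 2^(-N(H-d)) 2^(-(N-1)),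
   which forces M/N >= (H+1-d)/2 - O(1/N).
   Typicality follows from Chebyshev's inequality for the sum of the N i.i.d.
   surprisals -log2 p. *)

From HB Require Import structures.
From mathcomp Require Import all_boot all_order all_algebra.
From mathcomp Require Import all_classical all_reals all_analysis.
From mathcomp Require Import ring lra.
Set Implicit Arguments. Unset Strict Implicit. Unset Printing Implicit Defensive.
Import Order.TTheory GRing.Theory Num.Theory.
Import numFieldNormedType.Exports.
Local Open Scope classical_set_scope.
Local Open Scope ring_scope.

Section FiniteSums.
Variable R : realType.

Lemma sumr_delta (X : finType) (F : X -> R) (x0 : X) :
  \sum_x F x * (x == x0)%:R = F x0.
Proof.
rewrite (bigD1 x0) //= eqxx mulr1 big1 ?addr0 // => x /negbTE ->.
by rewrite mulr0.
Qed.

Lemma sumr_indicator (X : finType) (x0 : X) : \sum_x ((x0 == x)%:R : R) = 1.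
Proof.
rewrite -[RHS](sumr_delta (fun _ => 1) x0); apply: eq_bigr => x _.
by rewrite mul1r eq_sym.
Qed.

Lemma sumr_pair (I J : finType) (F : I * J -> R) :
  \sum_x F x = \sum_i \sum_j F (i, j).
Proof. by rewrite pair_bigA; apply: eq_bigr => -[]. Qed.

Lemma ler_psum_term (X : finType) (F : X -> R) x0 :
  (forall x, 0 <= F x) -> F x0 <= \sum_x F x.
Proof. by move=> F0; rewrite (bigD1 x0) //= lerDl sumr_ge0. Qed.

Lemma ler_psum_pred (X : finType) (P Q : pred X) (F : X -> R) :
  (forall x, 0 <= F x) -> (forall x, P x -> Q x) ->
  \sum_(x | P x) F x <= \sum_(x | Q x) F x.
Proof.
move=> F0 PQ; rewrite big_mkcond [leRHS]big_mkcond; apply: ler_sum => x _.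
by case: (boolP (P x)) => [/PQ -> //|_]; case: (Q x).
Qed.

End FiniteSums.

Section Relabel.
Variable R : realType.

Definition relabel (X Y : finType) (g : X -> Y) (v : X -> R) : Y -> R :=
  fun y => \sum_x v x * (g x == y)%:R.

Lemma relabel_comp (X Y Z : finType) (g1 : X -> Y) (g2 : Y -> Z) v :
  relabel g2 (relabel g1 v) = relabel (g2 \o g1) v.
Proof.
apply: boolp.funext => z; rewrite /relabel.
under eq_bigr do rewrite mulr_suml.
rewrite exchange_big; apply: eq_bigr => x _ /=.
under eq_bigr do rewrite -mulrA.
rewrite -mulr_sumr; congr (_ * _).
rewrite -[RHS](sumr_delta (fun y => (g2 y == z)%:R) (g1 x)).
by apply: eq_bigr => y _; rewrite mulrC [y == _]eq_sym.
Qed.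

(* Each component [v x] is moved from [x] to [g x], which costs at most
   [2 |v x|] in norm, and nothing when [x] is a fixed point. *)
Lemma opnorm_relabel_sub (X : finType) (g : X -> X) (v : X -> R) :
  opnorm (fun x => relabel g v x - v x) <= 2 * \sum_(x | g x != x) `|v x|.
Proof.
have E y : relabel g v y - v y = \sum_x v x * ((g x == y)%:R - (x == y)%:R).
  rewrite /relabel; under [in RHS]eq_bigr do rewrite mulrBr.
  by rewrite sumrB sumr_delta.
rewrite /opnorm; under eq_bigr do rewrite E.
apply: le_trans (ler_sum _ (fun y _ => ler_norm_sum _ _ _)) _.
rewrite exchange_big /= mulr_sumr [leRHS]big_mkcond /=; apply: ler_sum => x _.
under eq_bigr do rewrite normrM.
rewrite -mulr_sumr; case: (eqVneq (g x) x) => [->|_] /=.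
  by rewrite big1 ?mulr0 // => y _; rewrite subrr normr0.
rewrite mulrC ler_wpM2r //.
apply: le_trans (ler_sum _ (fun y _ => ler_normB _ _)) _.
by rewrite big_split /= !(eq_bigr _ (fun y _ => normr_nat _ _)) !sumr_indicator.
Qed.

Lemma sum_opnorm_relabel_sub (X : finType) (g : X -> X) (sigma : X -> R)
    r (G : 'I_r -> X -> R) :
  (forall i x, 0 <= G i x) -> (forall x, \sum_(i < r) G i x = sigma x) ->
  \sum_(i < r) opnorm (fun x => relabel g (G i) x - G i x) <=
  2 * \sum_(x | g x != x) sigma x.
Proof.
move=> G0 Gsigma.
apply: le_trans (ler_sum _ (fun i _ => opnorm_relabel_sub g (G i))) _.
rewrite -mulr_sumr ler_wpM2l // exchange_big /=.
by apply: ler_sum => x _; rewrite -Gsigma; apply: ler_sum => i _; rewrite ger0_norm.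
Qed.

End Relabel.

Section DeterministicChannels.
Variable R : realType.

(* The output sign is always [+], encoded as [false]. *)
Definition det_channel (L1 L2 : finType) (f : L1 -> L2) : L1 -> L2 * bool -> R :=
  fun j y => ((f j, false) == y)%:R.

Definition anc_map (L1 L2 : finType) (f : L1 -> L2) (d : nat) :
  LabAnc L1 d -> LabAnc L2 d := fun x => (f x.1.1, x.1.2, x.2).
Arguments anc_map {L1 L2} f {d}.

Lemma det_channel_is_channel (L1 L2 : finType) (f : L1 -> L2) :
  is_channel (det_channel f).
Proof. by move=> j; split => [y|]; rewrite /det_channel ?ler0n ?sumr_indicator. Qed.

Lemma act_triv_det (L1 L2 : finType) (f : L1 -> L2) (v : L1 -> R) :
  act_triv (det_channel f) v = relabel f v.
Proof.
apply: boolp.funext => m; rewrite /act_triv /relabel; apply: eq_bigr => j _.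
by rewrite big_bool /= /det_channel !xpair_eqE andbF andbT mulr0 add0r.
Qed.

Lemma act_anc_det (L1 L2 : finType) (f : L1 -> L2) d (Psi : LabAnc L1 d -> R) :
  act_anc (det_channel f) Psi = relabel (anc_map f) Psi.
Proof.
apply: boolp.funext => -[[m k] u].
rewrite /act_anc /relabel (sumr_pair (I := (L1 * 'I_d)%type)) (sumr_pair (I := L1)).
apply: eq_bigr => j _.
rewrite big_bool /= /det_channel !xpair_eqE /= andbF andbT mulr0 add0r.
under eq_bigr => k' _ do under eq_bigr => u' _ do
  rewrite !xpair_eqE -!mulnb !natrM mulrA.
under eq_bigr => k' _ do rewrite sumr_delta /= mulrCA.
by rewrite -mulr_sumr sumr_delta mulrC.
Qed.

Lemma sum_anc_pred (L : finType) d (Psi : LabAnc L d -> R) (Q : pred L) :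
  \sum_(x | Q x.1.1) Psi x = \sum_(j | Q j) \sum_k \sum_s Psi (j, k, s).
Proof.
rewrite big_mkcond (sumr_pair (I := (L * 'I_d)%type)) (sumr_pair (I := L)).
rewrite [RHS]big_mkcond; apply: eq_bigr => j _ /=.
by case: (Q j) => //; rewrite big1 // => k _; rewrite big1.
Qed.

Lemma disturbance_det_code_le (L1 L2 : finType) (sigma : L1 -> R)
    (f : L1 -> L2) (g : L2 -> L1) (T : pred L1) :
  (forall x, 0 <= sigma x) -> {in T, cancel f g} ->
  (disturbance sigma
     (fun v => act_triv (det_channel g) (act_triv (det_channel f) v))
     (fun d Psi => act_anc (det_channel g) (act_anc (det_channel f) Psi))
   <= (2 * \sum_(x | x \notin T) sigma x)%:E)%E.
Proof.
move=> sigma0 fK; apply: ge_ereal_sup => _ [v hv <-]; rewrite lee_fin.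
have moved x : g (f x) != x -> x \notin T by apply: contra => /fK ->.
case: hv => [[r [G [[[Gst _] Gsigma] ->]]]|[d [Psi [_ [[[Psi0 _] Psisigma]
  [r [G [[[Gst _] GPsi] ->]]]]]]]].
  under eq_bigr do rewrite /= !act_triv_det relabel_comp.
  have G0 i x : 0 <= G i x by case: (Gst i) => + _; apply.
  apply: le_trans (sum_opnorm_relabel_sub _ G0 Gsigma) _.
  by rewrite ler_wpM2l // ler_psum_pred.
under eq_bigr do rewrite /= !act_anc_det relabel_comp.
have G0 i x : 0 <= G i x by case: (Gst i) => + _; apply.
apply: le_trans (sum_opnorm_relabel_sub _ G0 GPsi) _.
rewrite ler_wpM2l // -(eq_bigr _ (fun j _ => Psisigma j)) -sum_anc_pred.
apply: ler_psum_pred => // -[[j k] s] fixed; apply: moved.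
by apply: contraNneq fixed => /= fj; rewrite /anc_map /= fj.
Qed.

End DeterministicChannels.
Arguments det_channel {R L1 L2} f.

Section ReturnProbability.
Variable R : realType.
Variables (L1 L2 : finType).
Variables (lamE : L1 -> L2 * bool -> R) (lamD : L2 -> L1 * bool -> R).
Hypotheses (lamE_ch : is_channel lamE) (lamD_ch : is_channel lamD).

Definition return_prob (x : L1) : R :=
  \sum_y (\sum_t lamE x (y, t)) * (\sum_t lamD y (x, t)).

Let lamE_ge0 x z : 0 <= lamE x z. Proof. by case: (lamE_ch x) => + _; apply. Qed.
Let lamD_ge0 y z : 0 <= lamD y z. Proof. by case: (lamD_ch y) => + _; apply. Qed.

Let sum_lamE x : \sum_y \sum_t lamE x (y, t) = 1.
Proof. by rewrite -sumr_pair; case: (lamE_ch x). Qed.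

Let sum_lamD y : \sum_x \sum_t lamD y (x, t) = 1.
Proof. by rewrite -sumr_pair; case: (lamD_ch y). Qed.

Lemma return_prob_ge0 x : 0 <= return_prob x.
Proof. by apply: sumr_ge0 => y _; apply: mulr_ge0; apply: sumr_ge0. Qed.

Lemma return_prob_le1 x : return_prob x <= 1.
Proof.
rewrite -(sum_lamE x); apply: ler_sum => y _; rewrite ler_piMr ?sumr_ge0 //.
rewrite -(sum_lamD y); apply: (ler_psum_term (F := fun x => \sum_t lamD y (x, t))).
by move=> x'; apply: sumr_ge0.
Qed.

(* Each bibit label [y] returns to at most one unit of total probability. *)
Lemma sum_return_prob_le : \sum_x return_prob x <= #|L2|%:R.
Proof.
apply: le_trans (_ : \sum_x \sum_y \sum_t lamD y (x, t) <= _).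
  apply: ler_sum => x _; apply: ler_sum => y _; rewrite ler_piMl ?sumr_ge0 //.
  rewrite -(sum_lamE x); apply: (ler_psum_term (F := fun y => \sum_t lamE x (y, t))).
  by move=> y'; apply: sumr_ge0.
by rewrite exchange_big /=; under eq_bigr do rewrite sum_lamD; rewrite sumr_const.
Qed.

Lemma act_triv_point (rho : L1 -> R) (e : L1) :
  act_triv lamD (act_triv lamE (fun x => rho x * (x == e)%:R)) e =
  rho e * return_prob e.
Proof.
rewrite /act_triv /return_prob mulr_sumr; apply: eq_bigr => y _.
have -> : \sum_j \sum_t rho j * (j == e)%:R * lamE j (y, t) =
          rho e * \sum_t lamE e (y, t).
  under eq_bigr do rewrite -mulr_sumr mulrAC.
  by rewrite (sumr_delta (fun j => rho j * \sum_t lamE j (y, t))).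
by rewrite mulrA [RHS]mulr_sumr.
Qed.

Lemma disturbance_ge_return_prob (rho : L1 -> R) : is_deterministic rho ->
  ((1 - \sum_x rho x * return_prob x)%:E <=
   disturbance rho (fun v => act_triv lamD (act_triv lamE v))
     (fun d Psi => act_anc lamD (act_anc lamE Psi)))%E.
Proof.
move=> [[rho0 _] rho1].
pose G (i : 'I_#|L1|) x := rho x * (enum_rank x == i)%:R.
have Gsum x : \sum_i G i x = rho x by rewrite /G -mulr_sumr sumr_indicator mulr1.
have Gpoint x : G (enum_rank x) = fun y => rho y * (y == x)%:R.
  by apply: boolp.funext => y; rewrite /G (inj_eq enum_rank_inj).
have sumG : (fun x => \sum_i G i x) = rho by apply: boolp.funext => x; exact: Gsum.
set V := \sum_i opnorm (fun x => act_triv lamD (act_triv lamE (G i)) x - G i x).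
apply: (@le_trans _ _ V%:E); last first.
  apply: ereal_sup_ubound; exists V => //; left; exists #|L1|, G; split => //.
  split; last exact: Gsum.
  split; last by rewrite sumG; split => //; split => //; rewrite rho1.
  move=> i; split => [x|]; first by rewrite mulr_ge0.
  by rewrite -rho1; apply: ler_sum => x _; rewrite ler_piMr // lern1 leq_b1.
rewrite lee_fin -rho1 -sumrB /V (reindex enum_rank) /=; last first.
  exact/onW_bij/enum_rank_bij.
apply: ler_sum => x _; rewrite Gpoint.
set Gx := fun y => rho y * (y == x)%:R.
apply: le_trans (ler_psum_term (F := fun y =>
  `|act_triv lamD (act_triv lamE Gx) y - Gx y|) x _) => //.
by rewrite /Gx eqxx mulr1 act_triv_point -normrN opprB ler_norm.
Qed.

End ReturnProbability.

Section IIDProducts.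
Variable R : realType.
Variables (D n : nat) (p : 'I_D -> R).
Hypotheses (p_ge0 : forall a, 0 <= p a) (p_sum1 : \sum_(a < D) p a = 1).

Definition iid_prob (i : {ffun 'I_n.+1 -> 'I_D}) : R := \prod_(k < n.+1) p (i k).

Lemma iid_prob_ge0 i : 0 <= iid_prob i.
Proof. exact: prodr_ge0. Qed.

Lemma sum_iid_prob : \sum_i iid_prob i = 1.
Proof.
rewrite /iid_prob -(bigA_distr_bigA (fun (k : 'I_n.+1) (a : 'I_D) => p a)) /=.
by rewrite big1.
Qed.

Lemma sum_tensor_power_pred (Q : pred {ffun 'I_n.+1 -> 'I_D}) :
  \sum_(y : LabN D n | Q y.1) tensor_power p y = \sum_(i | Q i) iid_prob i.
Proof.
rewrite big_mkcond (sumr_pair (I := {ffun 'I_n.+1 -> 'I_D})) [RHS]big_mkcond.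
apply: eq_bigr => i _ /=; case: (Q i); last by rewrite big1.
rewrite /tensor_power /= sumr_const card_ffun card_bool card_ord -mulrnAr.
by rewrite -mulr_natr natrX -exprMn mulVf ?expr1n ?mulr1 ?pnatr_eq0.
Qed.

Lemma tensor_power_deterministic : is_deterministic (@tensor_power R D n p).
Proof.
have tp1 : \sum_(y : LabN D n) tensor_power p y = 1.
  by rewrite -sum_iid_prob -(sum_tensor_power_pred xpredT).
split; last exact: tp1.
split=> [y|]; last by rewrite tp1.
by rewrite /tensor_power mulr_ge0 ?exprn_ge0 ?invr_ge0 ?iid_prob_ge0.
Qed.

Lemma prod_if_eq (a : 'I_n.+1) (f : 'I_n.+1 -> R) :
  \prod_k (if k == a then f k else 1) = f a.
Proof. by rewrite (bigD1 a) //= eqxx big1 ?mulr1 // => k /negbTE ->. Qed.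

(* Expand the sum of products coordinatewise; for [a != b] the factor
   [\sum_x p x * g x = 0] appears. *)
Lemma iid_cov (g : 'I_D -> R) a b : \sum_x p x * g x = 0 ->
  \sum_i iid_prob i * (g (i a) * g (i b)) = (a == b)%:R * \sum_x p x * g x ^+ 2.
Proof.
move=> g_centred.
pose F k x := p x * ((if k == a then g x else 1) * (if k == b then g x else 1)).
have E i : iid_prob i * (g (i a) * g (i b)) = \prod_k F k (i k).
  rewrite /F big_split /= big_split /=.
  by rewrite (prod_if_eq a (fun k => g (i k))) (prod_if_eq b (fun k => g (i k))).
rewrite (eq_bigr _ (fun i _ => E i)) -(bigA_distr_bigA F) (bigD1 a) //= /F eqxx.
case: (eqVneq a b) => [<-|ab].
  rewrite [\prod_(k | _) _]big1 => [|k ka]; last first.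
    by rewrite (negbTE ka); under eq_bigr do rewrite !mulr1; rewrite p_sum1.
  by rewrite mulr1 mul1r; apply: eq_bigr => x _; rewrite expr2.
by rewrite mul0r; under eq_bigr do rewrite mulr1; rewrite g_centred mul0r.
Qed.

Lemma iid_var_sum (g : 'I_D -> R) : \sum_x p x * g x = 0 ->
  \sum_i iid_prob i * (\sum_k g (i k)) ^+ 2 = n.+1%:R * \sum_x p x * g x ^+ 2.
Proof.
move=> g_centred.
under eq_bigr => i _ do rewrite expr2 mulr_suml mulr_sumr.
rewrite exchange_big /=.
rewrite (eq_bigr (fun a => \sum_b \sum_i iid_prob i * (g (i a) * g (i b)))) => [|a _].
  under eq_bigr => a _ do under eq_bigr => b _ do rewrite (iid_cov _ _ g_centred).
  under eq_bigr => a _ do rewrite -mulr_suml sumr_indicator mul1r.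
  by rewrite sumr_const card_ord mulr_natl.
by under eq_bigr do rewrite !mulr_sumr; rewrite exchange_big.
Qed.

End IIDProducts.

Section PowersOfTwo.
Variable R : realType.

Lemma ler_pow2 (x y : R) : x <= y -> 2 `^ x <= 2 `^ y.
Proof. by apply: ler_powR; rewrite ler1n. Qed.

Lemma lt_pow2 (x y : R) : 2 `^ x < 2 `^ y -> x < y.
Proof. by apply: contraTT; rewrite -!leNgt; apply: ler_pow2. Qed.

Lemma pow2D (x y : R) : 2 `^ (x + y) = 2 `^ x * 2 `^ y.
Proof. by rewrite powRD // pnatr_eq0 implybT. Qed.

Lemma pow2_sum (I : Type) (r : seq I) (F : I -> R) :
  2 `^ (\sum_(i <- r) F i) = \prod_(i <- r) 2 `^ F i.
Proof. exact: (big_morph _ pow2D (powRr0 2)). Qed.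

Lemma pow2_log2 (c : R) : 0 < c -> 2 `^ log2 c = c.
Proof.
move=> c0; rewrite /log2 /powR pnatr_eq0 /= divfK ?lnK ?posrE //.
by rewrite gt_eqF // ln_gt0 // ltr1n.
Qed.

End PowersOfTwo.

Lemma chebyshev_fin (R : realType) (X : finType) (P Y : X -> R) (t : R) :
  (forall x, 0 <= P x) -> 0 < t ->
  \sum_(x | t < `|Y x|) P x <= (\sum_x P x * Y x ^+ 2) / t ^+ 2.
Proof.
move=> P0 t0; rewrite mulr_suml.
apply: le_trans (_ : \sum_(x | t < `|Y x|) P x * Y x ^+ 2 / t ^+ 2 <= _).
  apply: ler_sum => x tY; rewrite -mulrA ler_peMr // ler_pdivlMr ?exprn_gt0 // mul1r.
  by rewrite -[Y x ^+ 2]real_normK ?num_real // lerXn2r ?nnegrE ?ltW // (lt_trans t0).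
rewrite [leRHS](bigID (fun x => t < `|Y x|)) /= lerDl; apply: sumr_ge0 => x _.
by apply: divr_ge0; [apply: mulr_ge0|]; rewrite ?sqr_ge0.
Qed.

Section TypicalSequences.
Variable R : realType.
Variables (D : nat) (p : 'I_D -> R).
Hypotheses (p_ge0 : forall a, 0 <= p a) (p_sum1 : \sum_(a < D) p a = 1).

Definition surprisal (a : 'I_D) : R := - log2 (p a).

Definition surprisal_var : R := \sum_a p a * (surprisal a - shannon p) ^+ 2.

Lemma shannonE : shannon p = \sum_a p a * surprisal a.
Proof. by rewrite /shannon -sumrN; apply: eq_bigr => a _; rewrite mulrN. Qed.

Lemma shannon_ge0 : 0 <= shannon p.
Proof.
rewrite shannonE; apply: sumr_ge0 => a _; rewrite mulr_ge0 // oppr_ge0.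
rewrite /log2 pmulr_lle0 ?invr_gt0 ?ln_gt0 ?ltr1n // ln_le0 // -p_sum1.
exact: (ler_psum_term (F := p)).
Qed.

Variable n : nat.
Local Notation N := (n.+1%:R : R).

Definition typical (d : R) : {set {ffun 'I_n.+1 -> 'I_D}} :=
  [set i | (0 < iid_prob p i) &&
           (`|\sum_k surprisal (i k) - N * shannon p| <= N * d)].

Lemma iid_prob_pow2 (i : {ffun 'I_n.+1 -> 'I_D}) :
  0 < iid_prob p i -> iid_prob p i = 2 `^ (- \sum_k surprisal (i k)).
Proof.
move=> Pi_gt0; rewrite -sumrN pow2_sum; apply: eq_bigr => k _.
rewrite opprK pow2_log2 // lt_neqAle p_ge0 andbT eq_sym; apply/negP => /eqP pk0.
by move: Pi_gt0; rewrite /iid_prob (bigD1 k) //= pk0 mul0r ltxx.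
Qed.

Lemma typical_prob_le d i :
  i \in typical d -> iid_prob p i <= 2 `^ (- (N * (shannon p - d))).
Proof.
rewrite inE => /andP[Pi_gt0]; rewrite ler_norml => /andP[lo hi].
by rewrite iid_prob_pow2 //; apply: ler_pow2; lra.
Qed.

Lemma typical_prob_ge d i :
  i \in typical d -> 2 `^ (- (N * (shannon p + d))) <= iid_prob p i.
Proof.
rewrite inE => /andP[Pi_gt0]; rewrite ler_norml => /andP[lo hi].
by rewrite iid_prob_pow2 //; apply: ler_pow2; lra.
Qed.

Lemma card_typical_le d : #|typical d|%:R <= 2 `^ (N * (shannon p + d)).
Proof.
set x := N * (shannon p + d).
have : #|typical d|%:R * 2 `^ (- x) <= 1.
  rewrite mulr_natl -sumr_const -[leRHS](sum_iid_prob n p_sum1).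
  rewrite [leRHS](bigID (mem (typical d))) /=.
  apply: le_trans (ler_sum _ (fun i => @typical_prob_ge d i)) _.
  by rewrite lerDl sumr_ge0 // => i _; apply: iid_prob_ge0.
by rewrite powRN -ler_pdivlMr ?invr_gt0 ?powR_gt0 // invrK mul1r.
Qed.

Lemma atypical_mass_le d : 0 < d ->
  \sum_(i | i \notin typical d) iid_prob p i <= surprisal_var / (N * d ^+ 2).
Proof.
move=> d_gt0.
pose Y (i : {ffun 'I_n.+1 -> 'I_D}) := \sum_k (surprisal (i k) - shannon p).
have YE i : Y i = \sum_k surprisal (i k) - N * shannon p.
  by rewrite /Y sumrB sumr_const card_ord mulr_natl.
have Nd_gt0 : 0 < N * d by rewrite mulr_gt0.
apply: le_trans (_ : \sum_(i | N * d < `|Y i|) iid_prob p i <= _).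
  rewrite big_mkcond [leRHS]big_mkcond; apply: ler_sum => i _.
  case: (boolP (N * d < `|Y i|)) => [_|].
    by case: ifP => // _; exact: iid_prob_ge0.
  by rewrite -leNgt inE -YE => ->; rewrite andbT -leNgt; case: ifP.
apply: le_trans (chebyshev_fin _ (fun i => iid_prob_ge0 p_ge0 i) Nd_gt0) _.
rewrite /Y (iid_var_sum n p_sum1 (g := fun a => surprisal a - shannon p)); last first.
  under eq_bigr do rewrite mulrBr.
  by rewrite sumrB -mulr_suml p_sum1 mul1r shannonE subrr.
have -> : N * surprisal_var / (N * d) ^+ 2 = surprisal_var / (N * d ^+ 2).
  by field; rewrite gt_eqF // addrC natr1 pnatr_eq0.
by [].
Qed.

End TypicalSequences.

Lemma exists_code_on (A B : finType) (S : {set A}) (a0 : A) (b0 : B) :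
  (#|S| <= #|B|)%N -> exists (f : A -> B) (g : B -> A), {in S, cancel f g}.
Proof.
move=> SB.
exists (fun x => nth b0 (enum B) (index x (enum S))).
exists (fun y => nth a0 (enum S) (index y (enum B))) => x xS.
have xS_idx : (index x (enum S) < size (enum S))%N by rewrite index_mem mem_enum.
rewrite index_uniq ?enum_uniq ?nth_index ?mem_enum //.
by apply: leq_trans xS_idx _; rewrite -!cardE.
Qed.

Lemma card_LabN (D n : nat) : #|LabN D n| = (D ^ n.+1 * 2 ^ n)%N.
Proof. by rewrite card_prod !card_ffun !card_ord card_bool. Qed.

Section TensorPowerCodes.
Variable R : realType.
Variables (D n m : nat) (p : 'I_D -> R) (eps : R).
Hypotheses (p_ge0 : forall a, 0 <= p a) (p_sum1 : \sum_(a < D) p a = 1).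
Variable T : {set {ffun 'I_n.+1 -> 'I_D}}.

Local Notation atypical_mass := (\sum_(i | i \notin T) iid_prob p i).

(* Encode the sequences of [T], together with all their signs, injectively
   into bibit labels, and decode by a left inverse. *)
Lemma codes_exist_of_mass : (0 < D)%N ->
  (#|T| * 2 ^ n <= #|LabN 2 m|)%N -> 2 * atypical_mass < eps ->
  codes_exist p n m eps.
Proof.
move=> D_gt0 cardT massT.
pose S : {set LabN D n} := finset.setX T finset.setT.
have cardS : (#|S| <= #|LabN 2 m|)%N.
  by rewrite cardsX cardsT card_ffun card_bool card_ord.
have a0 : LabN D n := ([ffun => Ordinal D_gt0], [ffun => false]).
have b0 : LabN 2 m := ([ffun => ord0], [ffun => false]).
have [f [g fK]] := exists_code_on a0 b0 cardS.
exists (det_channel f), (det_channel g).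
split; first exact: det_channel_is_channel.
split; first exact: det_channel_is_channel.
have [[tp_ge0 _] _] := tensor_power_deterministic n p_ge0 p_sum1.
apply: le_lt_trans (disturbance_det_code_le tp_ge0 fK) _.
rewrite lte_fin (eq_bigl (fun x : LabN D n => x.1 \notin T)) => [|[i s]].
  by rewrite (sum_tensor_power_pred p (fun i => i \notin T)).
by rewrite finset.in_setX finset.in_setT andbT.
Qed.

Lemma codes_exist_mass_bound (c : R) :
  0 <= c -> {in T, forall i, iid_prob p i <= c} -> codes_exist p n m eps ->
  1 - eps < atypical_mass + c * (2^-1) ^+ n * #|LabN 2 m|%:R.
Proof.
move=> c_ge0 Tc [lamE [lamD [chE [chD dist_lt]]]].
have rho_det := tensor_power_deterministic n p_ge0 p_sum1.
have [[rho_ge0 _] _] := rho_det.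
have := le_lt_trans (disturbance_ge_return_prob lamE lamD rho_det) dist_lt.
rewrite lte_fin => lost_lt.
suff : \sum_x tensor_power p x * return_prob lamE lamD x <=
       atypical_mass + c * (2^-1) ^+ n * #|LabN 2 m|%:R by lra.
rewrite (bigID (fun x : LabN D n => x.1 \in T)) /= addrC; apply: lerD.
  rewrite -(sum_tensor_power_pred p (fun i => i \notin T)).
  by apply: ler_sum => x _; rewrite ler_piMr ?return_prob_le1.
apply: le_trans (_ : \sum_(x | x.1 \in T)
    c * (2^-1) ^+ n * return_prob lamE lamD x <= _).
  apply: ler_sum => x xT; rewrite ler_wpM2r ?return_prob_ge0 //.
  by rewrite /tensor_power ler_wpM2r ?exprn_ge0 ?invr_ge0 ?Tc.
rewrite -mulr_sumr ler_wpM2l ?mulr_ge0 ?exprn_ge0 ?invr_ge0 //.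
apply: le_trans (sum_return_prob_le chE chD).
rewrite [leRHS](bigID (fun x : LabN D n => x.1 \in T)) /= lerDl.
by apply: sumr_ge0 => x _; apply: return_prob_ge0.
Qed.

End TensorPowerCodes.

Section Asymptotics.
Variable R : realType.
Variables (D : nat) (p : 'I_D -> R).
Hypotheses (D_gt0 : (0 < D)%N) (p_ge0 : forall a, 0 <= p a)
  (p_sum1 : \sum_(a < D) p a = 1).
Local Notation H := (shannon p).

Lemma atypical_mass_lt d c : 0 < d -> 0 < c ->
  \forall n \near \oo, \sum_(i | i \notin typical p n d) iid_prob p i < c.
Proof.
move=> d_gt0 c_gt0; near=> n.
have n_large : surprisal_var p / (d ^+ 2 * c) < n%:R by near: n; apply: nbhs_infty_gtr.
have d2c_gt0 : 0 < d ^+ 2 * c by rewrite mulr_gt0 ?exprn_gt0.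
apply: le_lt_trans (atypical_mass_le p_ge0 p_sum1 n d_gt0) _.
rewrite ltr_pdivrMr ?mulr_gt0 ?exprn_gt0 ?ltr0n // -natr1.
rewrite ltr_pdivrMr // in n_large.
have -> : c * ((n%:R + 1) * d ^+ 2) = n%:R * (d ^+ 2 * c) + d ^+ 2 * c by ring.
lra.
Unshelve. all: by end_near.
Qed.

Lemma codes_exist_eventually eps d : 0 < eps -> 0 < d ->
  \forall n \near \oo, forall m,
    n.+1%:R * (H + 1 + d) <= 2 * m.+1%:R -> codes_exist p n m eps.
Proof.
move=> eps_gt0 d_gt0; near=> n => m M_large.
have mass_lt : \sum_(i | i \notin typical p n d) iid_prob p i < eps / 2.
  by near: n; apply: atypical_mass_lt; rewrite ?divr_gt0.
apply: (codes_exist_of_mass p_ge0 p_sum1 (T := typical p n d)) => //; last by lra.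
rewrite -(ler_nat R) card_LabN !natrM !natrX -!powR_mulrn ?ler0n //.
apply: le_trans (_ : 2 `^ (n.+1%:R * (H + d)) * 2 `^ n%:R <= _).
  by rewrite ler_wpM2r ?powR_ge0 ?card_typical_le.
rewrite -!pow2D; apply: ler_pow2; move: M_large; rewrite -!natr1; lra.
Unshelve. all: by end_near.
Qed.

Lemma codes_exist_rate_lb eps d : 0 < eps < 1 -> 0 < d ->
  \forall n \near \oo, forall m, codes_exist p n m eps ->
    n.+1%:R * (H + 1 - d) + log2 ((1 - eps) / 2) < 2 * m.+1%:R.
Proof.
move=> /andP[eps_gt0 eps_lt1] d_gt0.
set c0 := (1 - eps) / 2.
have c0_gt0 : 0 < c0 by rewrite divr_gt0 // subr_gt0.
near=> n => m codes.
have mass_lt : \sum_(i | i \notin typical p n d) iid_prob p i < c0.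
  by near: n; apply: atypical_mass_lt.
have := codes_exist_mass_bound p_ge0 p_sum1 (powR_ge0 _ _)
  (fun i => @typical_prob_le _ _ _ p_ge0 n d i) codes.
rewrite exprVn -powR_invn ?ler0n // card_LabN natrM !natrX.
rewrite -!powR_mulrn ?ler0n // -!pow2D => bound.
have : 2 `^ log2 c0 <
    2 `^ (- (n.+1%:R * (H - d)) + - n%:R + (m.+1%:R + m%:R)).
  by rewrite pow2_log2 //; rewrite /c0 in mass_lt *; lra.
move/lt_pow2; rewrite -!natr1; lra.
Unshelve. all: by end_near.
Qed.

Lemma rate_ub eps d : 0 < eps -> 0 < d ->
  \forall n \near \oo, (rate p n eps <= ((H + 1) / 2 + d)%:E)%E.
Proof.
move=> eps_gt0 d_gt0; near=> n.
have codes : forall m,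
    n.+1%:R * (H + 1 + d) <= 2 * m.+1%:R -> codes_exist p n m eps.
  by near: n; apply: codes_exist_eventually.
have n_large : 2 / d < n%:R by near: n; apply: nbhs_infty_gtr.
have H_ge0 := shannon_ge0 p_ge0 p_sum1.
set x := n.+1%:R * (H + 1 + d) / 2.
have x_ge0 : 0 <= x by rewrite divr_ge0 // mulr_ge0 // addr_ge0 ?addr_ge0 // ltW.
apply: le_trans (ereal_inf_lbound _) _.
  exists (Num.truncn x) => //; apply: codes.
  by have := truncnS_gt x; rewrite /x; lra.
rewrite lee_fin ler_pdivrMr ?ltr0n //.
have : (Num.truncn x)%:R <= x by rewrite truncn_le.
move: (Num.truncn x) => k; rewrite /x; rewrite ltr_pdivrMr // in n_large.
rewrite -[n.+1]addn1 -[k.+1]addn1 !natrD; lra.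
Unshelve. all: by end_near.
Qed.

Lemma rate_lb eps d : 0 < eps < 1 -> 0 < d ->
  \forall n \near \oo, (((H + 1) / 2 - d)%:E <= rate p n eps)%E.
Proof.
move=> eps01 d_gt0; near=> n.
have codes_lb : forall m, codes_exist p n m eps ->
    n.+1%:R * (H + 1 - d) + log2 ((1 - eps) / 2) < 2 * m.+1%:R.
  by near: n; apply: codes_exist_rate_lb.
have n_large : - log2 ((1 - eps) / 2) / d < n%:R by near: n; apply: nbhs_infty_gtr.
apply: le_ereal_inf_tmp => _ [m codes <-]; rewrite lee_fin ler_pdivlMr ?ltr0n //.
have := codes_lb m codes.
rewrite ltr_pdivrMr // in n_large; rewrite -[n.+1]addn1 -[m.+1]addn1 !natrD; lra.
Unshelve. all: by end_near.
Qed.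

Lemma limsup_rate_eq eps : 0 < eps < 1 -> limsup_rate p eps = ((H + 1) / 2)%:E.
Proof.
move=> eps01; have /andP[eps_gt0 _] := eps01.
rewrite /limsup_rate limn_esup_lim; apply/le_anti/andP; split.
  apply/lee_addgt0Pr => d d_gt0.
  have [n0 _ ub] := rate_ub eps_gt0 d_gt0.
  apply: lime_le; first exact: is_cvg_esups.
  near=> n; apply: ge_ereal_sup => _ [k /= nk <-].
  rewrite -EFinD; apply: ub => /=; apply: leq_trans nk.
  by near: n; exists n0.
apply/lee_subgt0Pr => d d_gt0.
have [n0 _ lb] := rate_lb eps01 d_gt0.
apply: lime_ge; first exact: is_cvg_esups.
near=> n; apply: le_trans (_ : (rate p n eps <= _)%E).
  by rewrite -EFinB; apply: lb => /=; near: n; exists n0.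
by apply: ereal_sup_ubound; exists n => /=.
Unshelve. all: by end_near.
Qed.

End Asymptotics.

Theorem theorem1 (R : realType) (D : nat) (p : 'I_D -> R) :
  (1 < D)%N ->
  (forall i, 0 <= p i) -> \sum_(i < D) p i = 1 ->
  limsup_rate p eps @[eps --> 0^'+] --> ((shannon p + 1) / 2)%:E.
Proof.
move=> D_gt1 p_ge0 p_sum1; apply: cvg_near_cst; near=> eps.
apply: (limsup_rate_eq (ltnW D_gt1) p_ge0 p_sum1); apply/andP; split.
  by near: eps; apply: nbhs_right_gt.
by near: eps; apply: nbhs_right_lt; rewrite ltr01.
Unshelve. all: by end_near.
Qed.
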